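(* Let $n\ge 13$ and let $CT_n$ be the set of chemical trees on $n$ vertices. For a tree $T$ write $\mathbf m(T)=(m_{3,3}(T),m_{2,3}(T),m_{1,2}(T),m_{1,3}(T),m_{2,2}(T))$. For $1\le i\le 13$ let $A_i$ be the set of trees $T\in CT_n$ with $\Delta(T)\le 3$, $n_3(T)\le 2$ and $\mathbf m(T)$ equal to the following vector: $A_1:(0,0,2,0,n-3)$; $A_2:(0,1,1,2,n-5)$; $A_3:(0,2,2,1,n-6)$; $A_4:(0,3,3,0,n-7)$; $A_5:(0,2,0,4,n-7)$; $A_6:(0,3,1,3,n-8)$; $A_7:(0,4,2,2,n-9)$; $A_8:(1,1,1,3,n-7)$; $A_9:(0,5,3,1,n-10)$; $A_{10}:(1,2,2,2,n-8)$; $A_{11}:(0,6,4,0,n-11)$; $A_{12}:(1,3,3,1,n-9)$; $A_{13}:(1,4,4,0,n-10)$. Let $\Omega(n)$ be the set of trees $T\in CT_n$ having $3$ vertices of degree $3$, $n-8$ vertices of degree $2$ and $5$ vertices of degree $1$, with $m_{1,2}(T)=m_{2,3}(T)=5$, $m_{1,3}(T)=0$, $m_{3,3}(T)=2$, $m_{2,2}(T)=n-13$. Let $T_1\in A_1$, $T_2\in A_4$, $T_3\in A_3$, $T_4\in A_2$, $T_5\in A_{13}$, $T_6\in A_{11}$, $T_7\in A_{12}$, $T_8\in A_9$, $T_9\in A_{10}$, $T_{10}\in A_7$, $T_{11}\in A_8$, $T_{12}\in A_6$, $T_{13}\in A_5$, $T_{14}\in\Omega(n)$, and let $T\in CT_n$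 not belong to $A_1\cup\cdots\cup A_{13}\cup\Omega(n)$. Then $SO(T_1)<SO(T_2)<SO(T_3)<\cdots<SO(T_{13})<SO(T_{14})<SO(T)$.
   Context: All graphs are simple and connected. A chemical graph is a graph with maximum degree at most $4$; a chemical tree is a chemical graph that is a tree. $d_G(u)$ is the degree of $u$, $\Delta(G)$ the maximum degree, $n_i(G)$ the number of vertices of degree $i$, and $m_{i,j}(G)$ the number of edges joining a vertex of degree $i$ to a vertex of degree $j$. The Sombor index is $SO(G)=\sum_{uv\in E(G)}\sqrt{d_G(u)^2+d_G(v)^2}$. *)

From mathcomp Require Import all_boot all_order all_algebra.
Set Implicit Arguments. Unset Strict Implicit. Unset Printing Implicit Defensive.
Import Order.TTheory GRing.Theory Num.Theory.

Section Graphs.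
Variable n : nat.
Implicit Type e : rel 'I_n.

Definition simple_graph e := irreflexive e /\ symmetric e.

Definition connected_graph e := forall x y : 'I_n, connect e x y.

Definition acyclic_graph e :=
  forall c : seq 'I_n, 3 <= size c -> uniq c -> ~~ cycle e c.

Definition is_tree e := [/\ simple_graph e, connected_graph e & acyclic_graph e].

Definition deg e (u : 'I_n) : nat := #|[set v | e u v]|.

Definition chem_tree e := is_tree e /\ forall u, deg e u <= 4.

Definition max_deg_le e (k : nat) := forall u, deg e u <= k.

Definition nverts e (i : nat) : nat := #|[set u | deg e u == i]|.

Definition medges e (i j : nat) : nat :=
  #|[set p : 'I_n * 'I_n | [&& (p.1 < p.2)%N, e p.1 p.2 &
      ((deg e p.1 == i) && (deg e p.2 == j)) ||
      ((deg e p.1 == j) && (deg e p.2 == i))]]|.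

Definition mvec e : nat * nat * nat * nat * nat :=
  (medges e 3 3, medges e 2 3, medges e 1 2, medges e 1 3, medges e 2 2).

Definition SO (R : rcfType) e : R :=
  \sum_(u : 'I_n) \sum_(v : 'I_n | (u < v)%N && e u v)
     Num.sqrt (((deg e u) ^ 2 + (deg e v) ^ 2)%N%:R).

End Graphs.

Definition Avec (n i : nat) : nat * nat * nat * nat * nat :=
  match i with
  | 1 => (0, 0, 2, 0, n - 3)
  | 2 => (0, 1, 1, 2, n - 5)
  | 3 => (0, 2, 2, 1, n - 6)
  | 4 => (0, 3, 3, 0, n - 7)
  | 5 => (0, 2, 0, 4, n - 7)
  | 6 => (0, 3, 1, 3, n - 8)
  | 7 => (0, 4, 2, 2, n - 9)
  | 8 => (1, 1, 1, 3, n - 7)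
  | 9 => (0, 5, 3, 1, n - 10)
  | 10 => (1, 2, 2, 2, n - 8)
  | 11 => (0, 6, 4, 0, n - 11)
  | 12 => (1, 3, 3, 1, n - 9)
  | 13 => (1, 4, 4, 0, n - 10)
  | _ => (0, 0, 0, 0, 0)
  end%N.

(* T in A_i (only meaningful for 1 <= i <= 13) *)
Definition in_A (n : nat) (e : rel 'I_n) (i : nat) : Prop :=
  [/\ chem_tree e, max_deg_le e 3, nverts e 3 <= 2 & mvec e = Avec n i].

Definition in_Omega (n : nat) (e : rel 'I_n) : Prop :=
  [/\ chem_tree e,
      [/\ nverts e 3 = 3, nverts e 2 = n - 8 & nverts e 1 = 5],
      [/\ medges e 1 2 = 5, medges e 2 3 = 5 & medges e 1 3 = 0] &
      (medges e 3 3 = 2 /\ medges e 2 2 = n - 13)].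

From mathcomp Require Import all_boot all_order all_algebra.
From mathcomp Require Import lra zify.
Import Order.TTheory GRing.Theory Num.Theory.
Set Implicit Arguments. Unset Strict Implicit. Unset Printing Implicit Defensive.

(* Every edge of a chemical tree T on n vertices joins degrees i <= j <= 4, so
   SO(T) = sum m_{i,j} sqrt(i^2 + j^2).  A tree has n - 1 edges, hence
   SO(T) - (n - 1) sqrt 8 = sum m_{i,j} (sqrt(i^2 + j^2) - sqrt 8): edges between
   two vertices of degree 2 drop out and only m_{1,2} has a negative weight.
   The handshake identities, the leaf count n_1 = 2 + n_3 + 2 n_4 and the forest
   bound m_{3,3} + m_{3,4} + m_{4,4} < n_3 + n_4 (the vertices of degree >= 3 span
   a forest) turn this excess into a small linear program.  When n_4 = 0 and
   n_3 <= 2 they force m(T) to be one of the thirteen vectors defining A_1..A_13;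
   when n_4 = 0, n_3 = 3, m_{3,3} = 2 and m_{1,3} = 0 they force T into Omega(n);
   in all other cases the excess is larger than that of Omega(n).  The chain
   SO(T_1) < ... < SO(T_14) compares explicit combinations of sqrt 5, sqrt 8,
   sqrt 10, sqrt 13 and sqrt 18, and four decimals of each root decide it. *)

Section InducedEdges.
Variables (n : nat) (e : rel 'I_n).

Definition induced_edges (S : {set 'I_n}) : {set 'I_n * 'I_n} :=
  [set p : 'I_n * 'I_n | [&& p.1 < p.2, e p.1 p.2, p.1 \in S & p.2 \in S]].

Definition edge_of (u v : 'I_n) : 'I_n * 'I_n := if u < v then (u, v) else (v, u).

Lemma induced_edgesS (S S' : {set 'I_n}) :
  S \subset S' -> induced_edges S \subset induced_edges S'.
Proof.
by move/subsetP=> sub; apply/subsetP=> p; rewrite !inE => /and4P[-> -> /sub-> /sub->].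
Qed.

Lemma connected_cut_edge (S : {set 'I_n}) x y :
  connected_graph e -> x \in S -> y \notin S ->
  exists u v, [/\ u \in S, v \notin S & e u v].
Proof.
move=> conn xS; have /connectP[p xp ->] := conn x y.
elim: p x xS xp => [|z p IHp] x xS /=; first by rewrite xS.
case/andP=> exz zp yS; case: (boolP (z \in S)) => [zS|zNS]; first exact: IHp zp yS.
by exists x, z.
Qed.

Hypotheses (e_irr : irreflexive e) (e_sym : symmetric e).

Lemma edge_of_induced (S : {set 'I_n}) u v :
  e u v -> u \in S -> v \in S -> edge_of u v \in induced_edges S.
Proof.
move=> euv uS vS; rewrite /edge_of inE.
case: (ltngtP u v) => [lt_uv|lt_vu|/val_inj eq_uv] /=.
- by rewrite lt_uv euv uS vS.
- by rewrite lt_vu e_sym euv uS vS.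
- by rewrite eq_uv e_irr in euv.
Qed.

Lemma acyclic_path_chord x y q z : acyclic_graph e ->
  path e x (y :: q) -> uniq (x :: y :: q) -> z \in q -> ~~ e x z.
Proof.
move=> acy xyq uniq_xyq zq; apply/negP=> exz.
case/splitPr: zq xyq uniq_xyq => q1 q2; rewrite -cat_rcons -!cat_cons.
rewrite cat_path cat_uniq => /andP[xyqz _] /andP[uniq_xyqz _].
have := acy _ _ uniq_xyqz; rewrite /= size_rcons => /(_ isT)/negP; apply.
by move: xyqz; rewrite /cycle rcons_path /= last_rcons [e z x]e_sym exz andbT.
Qed.

Definition simple_path_in (S : {set 'I_n}) (s : seq 'I_n) : bool :=
  if s is x :: p then [&& path e x p, uniq s & all [in S] s] else false.

(* The head of a longest simple path in S has a second neighbour in S, which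
   would either extend the path or close a cycle. *)
Lemma acyclic_has_leaf (S : {set 'I_n}) : acyclic_graph e -> S != set0 ->
  exists2 x, x \in S & #|[set y in S | e x y]| <= 1.
Proof.
move=> acy /set0Pn[x0 x0S].
have [/exists_inP[x xS leaf]|/exists_inP no_leaf] :=
  boolP [exists x in S, #|[set y in S | e x y]| <= 1]; first by exists x.
pose P k := [exists t : k.-tuple 'I_n, simple_path_in S t].
have P1 : P 1 by apply/existsP; exists [tuple x0]; rewrite /= x0S.
have P_le_n k : P k -> k <= n.
  case/existsP=> -[s size_s] /=.
  case: s size_s => [|x p] // /eqP <- /and3P[_ uniq_xp _].
  by rewrite -(card_uniqP uniq_xp) -[n in _ <= n]card_ord max_card.
have [m /existsP[[[|x p] //= /eqP size_xp]]] := ex_maxnP (ex_intro P 1 P1) P_le_n.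
case/and3P=> xp uniq_xp /andP[xS pS] max_m.
have [z zN z_head] : exists2 z, z \in [set y in S | e x y] & z != head x p.
  have /card_gt1P[z1 [z2 [z1N z2N z12]]] : 1 < #|[set y in S | e x y]|.
    by rewrite ltnNge; apply/negP=> leaf; apply: no_leaf; exists x.
  by case: (eqVneq z1 (head x p)) => [z1E|]; [exists z2; rewrite // -z1E eq_sym|exists z1].
move: zN; rewrite inE => /andP[zS exz].
have zx : z != x by apply: contraTneq exz => ->; rewrite e_irr.
case: (boolP (z \in x :: p)) => [|z_xp].
  rewrite inE (negbTE zx).
  case: p xp uniq_xp z_head {pS size_xp max_m} => //= y q xyq uniq_xyq.
  rewrite inE => /negbTE-> /= zq.
  by rewrite (negbTE (acyclic_path_chord acy xyq uniq_xyq zq)) in exz.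
have : P (size (x :: p)).+1.
  apply/existsP; exists (in_tuple [:: z, x & p]).
  by rewrite /= e_sym exz xp z_xp uniq_xp zS xS pS.
by move/max_m; rewrite /= size_xp ltnn.
Qed.

Lemma card_induced_edges_acyclic (S : {set 'I_n}) :
  acyclic_graph e -> #|induced_edges S| <= #|S| - 1.
Proof.
move=> acy; move cardS: #|S| => k; elim: k S cardS => [|k IHk] S cardS.
  move/eqP: cardS; rewrite cards_eq0 => /eqP->; rewrite leqn0 cards_eq0.
  by apply/eqP/setP=> p; rewrite !inE !andbF.
have [x xS leaf] : exists2 x, x \in S & #|[set y in S | e x y]| <= 1.
  by apply: acyclic_has_leaf; rewrite // -card_gt0 cardS.
have cardSx : #|S :\ x| = k by move: cardS; rewrite (cardsD1 x) xS => -[].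
set N := [set y in S | e x y] in leaf *.
have NSx : N \subset S :\ x.
  apply/subsetP=> y; rewrite !inE => /andP[-> exy]; rewrite andbT.
  by apply: contraTneq exy => ->; rewrite e_irr.
have cover : induced_edges S \subset induced_edges (S :\ x) :|: edge_of x @: N.
  apply/subsetP=> -[a b]; rewrite !inE /= => /and4P[lt_ab eab aS bS].
  case: (eqVneq a x) => [ax|a_x]; last case: (eqVneq b x) => [bx|b_x].
  - by apply/orP; right; apply/imsetP; exists b; rewrite ?inE -?ax ?bS // /edge_of lt_ab.
  - apply/orP; right; apply/imsetP; exists a; first by rewrite inE aS -bx e_sym.
    by rewrite /edge_of -bx ltnNge (ltnW lt_ab).
  - by rewrite lt_ab eab aS bS.
apply: leq_trans (subset_leq_card cover) _; apply: leq_trans (leq_card_setU _ _) _.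
have := leq_imset_card (edge_of x) N; have := subset_leq_card NSx.
have := IHk _ cardSx; rewrite cardSx.
(* lia does not identify these cardinals across the different finType instance
   paths inferred for them, so they are generalized first. *)
move: #|induced_edges (S :\ x)| #|edge_of x @: N| #|N| leaf => a b c; lia.
Qed.

Lemma connected_card_edges_ge : connected_graph e -> n - 1 <= #|induced_edges setT|.
Proof.
move=> conn.
have grow k : k < n -> exists2 S : {set 'I_n}, #|S| = k.+1 & k <= #|induced_edges S|.
  elim: k => [n_gt0|k IHk lt_kn]; first by exists [set Ordinal n_gt0]; rewrite ?cards1.
  have [S cardS le_k] := IHk (ltnW lt_kn).
  have /card_gt0P[x xS] : 0 < #|S| by rewrite cardS.
  have /card_gt0P[y] : 0 < #|~: S| by have := cardsC S; rewrite card_ord cardS; lia.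
  rewrite inE => yS; have [u [v [uS vS euv]]] := connected_cut_edge conn xS yS.
  exists (v |: S); first by rewrite cardsU1 vS cardS.
  have new_edge : edge_of u v \notin induced_edges S.
    by rewrite /edge_of; case: ifP; rewrite !inE (negbTE vS) !andbF.
  have sub : edge_of u v |: induced_edges S \subset induced_edges (v |: S).
    apply/subsetP=> p; rewrite in_setU1 => /predU1P[->|].
      by apply: edge_of_induced; rewrite ?setU11 ?setU1r.
    by apply/subsetP; apply: induced_edgesS; apply: subsetUr.
  by have := subset_leq_card sub; rewrite cardsU1 new_edge; apply: leq_ltn_trans.
have [n0|n_gt0] := posnP n; first by rewrite [X in X - 1]n0.
have := grow n.-1; rewrite ltn_predL => /(_ n_gt0)[S _ le_S].
by rewrite subn1; apply: leq_trans le_S (subset_leq_card (induced_edgesS (subsetT S))).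
Qed.

Lemma tree_card_edges :
  connected_graph e -> acyclic_graph e -> #|induced_edges setT| = n - 1.
Proof.
move=> conn acy; apply/eqP; rewrite eqn_leq connected_card_edges_ge // andbT.
by have := card_induced_edges_acyclic setT acy; rewrite cardsT card_ord.
Qed.

End InducedEdges.

Lemma card_set_nat_sum (T : finType) (P : pred T) : #|[set x | P x]| = \sum_x P x.
Proof.
by rewrite -sum1_card big_mkcond /=; apply: eq_bigr => x _; rewrite inE; case: (P x).
Qed.

Lemma medgesC n (e : rel 'I_n) i j : medges e i j = medges e j i.
Proof. by apply: eq_card => p; rewrite !inE [(_ && _) || _]orbC. Qed.

Definition deg_pairs : seq (nat * nat) :=
  [:: (1, 1); (1, 2); (1, 3); (1, 4); (2, 2); (2, 3); (2, 4); (3, 3); (3, 4); (4, 4)].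

Definition joins (i j a b : nat) : bool := ((a == i) && (b == j)) || ((a == j) && (b == i)).

Section EdgeClasses.
Local Open Scope ring_scope.

Lemma big_deg_pairs (V : nmodType) (F : nat * nat -> V) :
  \sum_(ij <- deg_pairs) F ij =
  F (1, 1)%N + F (1, 2)%N + F (1, 3)%N + F (1, 4)%N + F (2, 2)%N
  + F (2, 3)%N + F (2, 4)%N + F (3, 3)%N + F (3, 4)%N + F (4, 4)%N.
Proof. by rewrite !big_cons big_nil addr0 !addrA. Qed.

Lemma sum_deg_pairs_joins (V : nmodType) (f : nat -> nat -> V) a b :
  (forall a b, f a b = f b a) -> (0 < a <= 4)%N -> (0 < b <= 4)%N ->
  f a b = \sum_(ij <- deg_pairs) f ij.1 ij.2 *+ joins ij.1 ij.2 a b.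
Proof.
move=> fC; rewrite big_deg_pairs /joins.
by case: a => [|[|[|[|[|a]]]]] //; case: b => [|[|[|[|[|b]]]]] //= _ _;
  rewrite !mulr0n ?mulr1n ?add0r ?addr0.
Qed.

Variables (n : nat) (e : rel 'I_n).
Hypotheses (e_irr : irreflexive e) (e_sym : symmetric e).
Local Notation E := (induced_edges e setT).

Lemma sum_edges_endpoints (h : 'I_n -> nat) :
  (\sum_(p in E) (h p.1 + h p.2) = \sum_u deg e u * h u)%N.
Proof.
have -> : (\sum_u deg e u * h u = \sum_u \sum_(v | e u v) h u)%N.
  by apply: eq_bigr => u _; rewrite -sum_nat_const; apply: eq_bigl => v; rewrite inE.
rewrite pair_big_dep /= [RHS](bigID (fun p : 'I_n * 'I_n => p.1 < p.2)%N) /= big_split /=.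
congr (_ + _)%N; first by apply: eq_bigl => p; rewrite !inE !andbT andbC.
rewrite [RHS](reindex_inj (h := fun p : 'I_n * 'I_n => (p.2, p.1))) /=; last first.
  by move=> [a b] [c d] /= [-> ->].
apply: eq_bigl => -[a b] /=; rewrite !inE !andbT [e b a]e_sym andbC.
case: (boolP (e a b)) => //= eab; rewrite -leqNgt ltn_neqAle.
suff -> : (a != b :> nat) by [].
by apply: contraTneq eab => /val_inj->; rewrite e_irr.
Qed.

Lemma medges_joins i j :
  medges e i j = (\sum_(p in E) joins i j (deg e p.1) (deg e p.2))%N.
Proof.
rewrite /medges -sum1_card big_mkcond [RHS]big_mkcond /=; apply: eq_bigr => p _.
by rewrite !inE !andbT /joins; case: (p.1 < p.2)%N; case: (e p.1 p.2).
Qed.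

Lemma medges_gt0 a b : e a b -> (0 < medges e (deg e a) (deg e b))%N.
Proof.
move=> eab; apply/card_gt0P; exists (edge_of a b).
have := edge_of_induced e_irr e_sym eab (in_setT a) (in_setT b).
rewrite !inE /edge_of; case: ifP => _ /=; rewrite !andbT => /andP[-> ->];
  by rewrite !eqxx ?orbT.
Qed.

Lemma sum_edges_deg_pairs (V : nmodType) (f : nat -> nat -> V) :
  (forall a b, f a b = f b a) -> (forall u, 0 < deg e u <= 4)%N ->
  \sum_(p in E) f (deg e p.1) (deg e p.2) =
  \sum_(ij <- deg_pairs) f ij.1 ij.2 *+ medges e ij.1 ij.2.
Proof.
move=> fC deg_bd.
rewrite (eq_bigr _ (fun p _ => sum_deg_pairs_joins fC (deg_bd p.1) (deg_bd p.2))).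
by rewrite exchange_big; apply: eq_bigr => ij _; rewrite sumrMnr medges_joins.
Qed.

Lemma sum_edges_deg_pairs_nat (f : nat -> nat -> nat) :
  (forall a b, f a b = f b a) -> (forall u, 0 < deg e u <= 4)%N ->
  (\sum_(p in E) f (deg e p.1) (deg e p.2) =
   \sum_(ij <- deg_pairs) f ij.1 ij.2 * medges e ij.1 ij.2)%N.
Proof.
move=> fC deg_bd; rewrite sum_edges_deg_pairs //.
by apply: eq_bigr => ij _; rewrite -mulr_natr natn.
Qed.

Lemma SO_induced_edges (R : rcfType) :
  SO R e = \sum_(p in E) Num.sqrt (((deg e p.1) ^ 2 + (deg e p.2) ^ 2)%N%:R).
Proof. by rewrite /SO pair_big_dep /=; apply: eq_bigl => p; rewrite !inE !andbT. Qed.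

End EdgeClasses.

Lemma small_mvec_cases n n3 m12 m13 m22 m23 m33 :
  n3 <= 2 -> m12 + m13 = 2 + n3 -> 3 * n3 = m13 + m23 + 2 * m33 -> m33 <= n3 - 1 ->
  m12 + m13 + m22 + m23 + m33 = n - 1 -> 0 < m12 + m23 ->
  exists2 i, 1 <= i <= 13 & (m33, m23, m12, m13, m22) = Avec n i.
Proof.
move=> n3_le2 leaves deg3 forest edges deg2_cut.
have [n3E|[n3E|n3E]] : n3 = 0 \/ n3 = 1 \/ n3 = 2 by lia.
- by exists 1 => //; congr (_, _, _, _, _); lia.
- have [m13E|[m13E|m13E]] : m13 = 0 \/ m13 = 1 \/ m13 = 2 by lia.
  + by exists 4 => //; congr (_, _, _, _, _); lia.
  + by exists 3 => //; congr (_, _, _, _, _); lia.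
  + by exists 2 => //; congr (_, _, _, _, _); lia.
have [m33E|m33E] : m33 = 0 \/ m33 = 1 by lia.
- have [m13E|[m13E|[m13E|[m13E|m13E]]]] :
      m13 = 0 \/ m13 = 1 \/ m13 = 2 \/ m13 = 3 \/ m13 = 4 by lia.
  + by exists 11 => //; congr (_, _, _, _, _); lia.
  + by exists 9 => //; congr (_, _, _, _, _); lia.
  + by exists 7 => //; congr (_, _, _, _, _); lia.
  + by exists 6 => //; congr (_, _, _, _, _); lia.
  + by exists 5 => //; congr (_, _, _, _, _); lia.
- have [m13E|[m13E|[m13E|m13E]]] : m13 = 0 \/ m13 = 1 \/ m13 = 2 \/ m13 = 3 by lia.
  + by exists 13 => //; congr (_, _, _, _, _); lia.
  + by exists 12 => //; congr (_, _, _, _, _); lia.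
  + by exists 10 => //; congr (_, _, _, _, _); lia.
  + by exists 8 => //; congr (_, _, _, _, _); lia.
Qed.

Section SomborValues.
Local Open Scope ring_scope.
Variable R : rcfType.

Definition SO_of_mvec (m : nat * nat * nat * nat * nat) : R :=
  let: (m33, m23, m12, m13, m22) := m in
  m33%:R * Num.sqrt 18 + m23%:R * Num.sqrt 13 + m12%:R * Num.sqrt 5
  + m13%:R * Num.sqrt 10 + m22%:R * Num.sqrt 8.

Lemma SO_of_mvecE m33 m23 m12 m13 m22 :
  SO_of_mvec (m33, m23, m12, m13, m22) =
  m33%:R * Num.sqrt 18 + m23%:R * Num.sqrt 13 + m12%:R * Num.sqrt 5
  + m13%:R * Num.sqrt 10 + m22%:R * Num.sqrt 8.
Proof. by []. Qed.

Definition Omega_mvec (n : nat) : nat * nat * nat * nat * nat := (2, 5, 5, 0, n - 13)%N.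

(* [dec a b c] is the decimal a.bbcc; numerals stay small because lra is very
   slow on large ones. *)
Definition dec (a b c : nat) : R := a%:R + b%:R / 100 + c%:R / 100 ^+ 2.

Lemma sqrt_between (a lo hi : R) :
  0 <= lo -> 0 <= hi -> lo ^+ 2 <= a <= hi ^+ 2 -> lo <= Num.sqrt a <= hi.
Proof.
move=> lo_ge0 hi_ge0 /andP[lo_a a_hi].
by rewrite -[lo]ger0_norm // -[hi]ger0_norm // -!sqrtr_sqr !ler_wsqrtr.
Qed.

Lemma sqrt_approx :
  [/\ dec 2 23 60 <= Num.sqrt 5 <= dec 2 23 61,
      dec 2 82 84 <= Num.sqrt 8 <= dec 2 82 85,
      dec 3 16 22 <= Num.sqrt 10 <= dec 3 16 23,
      dec 3 60 55 <= Num.sqrt 13 <= dec 3 60 56 &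
  [/\ dec 4 12 31 <= Num.sqrt 17 <= dec 4 12 32,
      dec 4 24 26 <= Num.sqrt 18 <= dec 4 24 27,
      dec 4 47 21 <= Num.sqrt 20 <= dec 4 47 22,
      dec 5 0 0 <= Num.sqrt 25 <= dec 5 0 0 &
      dec 5 65 68 <= Num.sqrt 32 <= dec 5 65 69]].
Proof. by rewrite /dec; split; [..|split]; apply: sqrt_between; lra. Qed.

Variables (n : nat) (n_ge13 : (13 <= n)%N).
Local Notation s i := (SO_of_mvec (Avec n i)).

Let natrB_n k : (k <= 13)%N -> (n - k)%:R = n%:R - k%:R :> R.
Proof. by move=> k_le13; rewrite natrB // (leq_trans k_le13). Qed.

Lemma SO_of_mvec_chain :
  [/\ s 1 < s 4, s 4 < s 3, s 3 < s 2, s 2 < s 13 &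
  [/\ s 13 < s 11, s 11 < s 12, s 12 < s 9, s 9 < s 10 &
  [/\ s 10 < s 7, s 7 < s 8, s 8 < s 6, s 6 < s 5 &
      s 5 < SO_of_mvec (Omega_mvec n)]]].
Proof.
have [b5 b8 b10 b13 [_ b18 _ _ _]] := sqrt_approx.
rewrite /SO_of_mvec /dec /= !natrB_n // in b5 b8 b10 b13 b18 *.
by split; [lra.. | split; [lra.. | split; lra]].
Qed.

Lemma sombor_sum_gt_Omega n3 n4 m12 m13 m14 m22 m23 m24 m33 m34 m44 :
  (m12 + m13 + m14 + m22 + m23 + m24 + m33 + m34 + m44 = n - 1)%N ->
  (m12 + m13 + m14 = 2 + n3 + 2 * n4)%N ->
  (3 * n3 = m13 + m23 + 2 * m33 + m34)%N ->
  (4 * n4 = m14 + m24 + m34 + 2 * m44)%N ->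
  (m33 + m34 + m44 < n3 + n4)%N ->
  [\/ (0 < n4)%N, (3 < n3)%N, (n3 = 3)%N /\ (m33 <= 1)%N | (n3 = 3)%N /\ (0 < m13)%N] ->
  SO_of_mvec (Omega_mvec n) <
  m12%:R * Num.sqrt 5 + m13%:R * Num.sqrt 10 + m14%:R * Num.sqrt 17
  + m22%:R * Num.sqrt 8 + m23%:R * Num.sqrt 13 + m24%:R * Num.sqrt 20
  + m33%:R * Num.sqrt 18 + m34%:R * Num.sqrt 25 + m44%:R * Num.sqrt 32.
Proof.
move=> edges leaves deg3 deg4 forest not_small.
have [b5 b8 b10 b13 [b17 b18 b20 b25 b32]] := sqrt_approx.
have excess c (k lo : R) : lo <= Num.sqrt k ->
    c%:R * (lo - dec 2 82 85) <= c%:R * (Num.sqrt k - Num.sqrt 8).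
  by move=> lo_k; rewrite ler_wpM2l // lerB //; case/andP: b8.
(* Multiplying [edges] by sqrt 8 charges every edge sqrt 8; each edge class then
   contributes its excess over sqrt 8, bounded below by [excess]. *)
have := excess m12 _ _ (andP b5).1; have := excess m13 _ _ (andP b10).1.
have := excess m14 _ _ (andP b17).1; have := excess m23 _ _ (andP b13).1.
have := excess m24 _ _ (andP b20).1; have := excess m33 _ _ (andP b18).1.
have := excess m34 _ _ (andP b25).1; have := excess m44 _ _ (andP b32).1.
have := congr1 (fun k : nat => k%:R * Num.sqrt 8 : R) edges.
have := congr1 (GRing.natmul (1 : R)) leaves.
have := congr1 (GRing.natmul (1 : R)) deg3.
have := congr1 (GRing.natmul (1 : R)) deg4.
have : (m33 + m34 + m44 + 1)%:R <= (n3 + n4)%:R :> R by rewrite ler_nat addn1.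
rewrite /Omega_mvec SO_of_mvecE; cbv beta; rewrite !natrB_n // !natrD ?natrM.
move: (ler0n R m12) (ler0n R m13) (ler0n R m14) (ler0n R m22) (ler0n R m23).
move: (ler0n R m24) (ler0n R m33) (ler0n R m34) (ler0n R m44) (ler0n R n3) (ler0n R n4).
move: b5 b8 b13 b18; rewrite /dec.
case: not_small => [n4_gt0|n3_gt3|[n3E m33_le1]|[n3E m13_gt0]].
- have : 1 <= n4%:R :> R by rewrite ler1n.
  lra.
- have : 4 <= n3%:R :> R by rewrite (ler_nat R 4).
  lra.
- have : m33%:R <= 1 :> R by rewrite (ler_nat R m33 1).
  by rewrite n3E; lra.
- have : 1 <= m13%:R :> R by rewrite ler1n.
  by rewrite n3E; lra.
Qed.

End SomborValues.

Section ChemicalTree.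
Variables (n : nat) (e : rel 'I_n).
Hypotheses (e_chem : chem_tree e) (n_gt2 : 2 < n).
Local Notation m := (medges e).
Local Notation nv := (nverts e).

Let e_irr : irreflexive e. Proof. by case: e_chem => -[[]]. Qed.
Let e_sym : symmetric e. Proof. by case: e_chem => -[[]]. Qed.
Let e_conn : connected_graph e. Proof. by case: e_chem => -[]. Qed.
Let e_acyclic : acyclic_graph e. Proof. by case: e_chem => -[]. Qed.

Lemma deg_bounds u : 0 < deg e u <= 4.
Proof.
rewrite e_chem.2 andbT; have /card_gt0P[v] : 0 < #|~: [set u]|.
  by have := cardsC [set u]; rewrite cards1 card_ord; lia.
rewrite inE => vu; have [_ [w [/set1P-> _ euw]]] := connected_cut_edge e_conn (set11 u) vu.
by apply/card_gt0P; exists w; rewrite inE.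
Qed.

Lemma nverts_total : nv 1 + nv 2 + nv 3 + nv 4 = n.
Proof.
rewrite /nverts !card_set_nat_sum -!big_split -[RHS]card_ord -sum1_card /=.
by apply: eq_bigr => u _; have := deg_bounds u; case: (deg e u) => [|[|[|[|[|k]]]]].
Qed.

Lemma medges_total :
  m 1 1 + m 1 2 + m 1 3 + m 1 4 + m 2 2 + m 2 3 + m 2 4 + m 3 3 + m 3 4 + m 4 4 = n - 1.
Proof.
rewrite -(tree_card_edges e_irr e_sym e_conn e_acyclic) -sum1_card.
rewrite (sum_edges_deg_pairs_nat (f := fun _ _ => 1)) //; last exact: deg_bounds.
by rewrite big_deg_pairs !natrDE !mul1n.
Qed.

Lemma handshake k :
  k * nv k = \sum_(ij <- deg_pairs) ((ij.1 == k) + (ij.2 == k)) * m ij.1 ij.2.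
Proof.
have -> : k * nv k = \sum_u deg e u * (deg e u == k).
  rewrite /nverts card_set_nat_sum big_distrr; apply: eq_bigr => u _ /=.
  by case: eqP => [->|]; rewrite ?muln0 ?muln1.
rewrite -(sum_edges_endpoints e_irr e_sym (fun u => nat_of_bool (deg e u == k))).
rewrite (sum_edges_deg_pairs_nat (f := fun a b => (a == k) + (b == k))) //.
- by move=> a b; rewrite addnC.
- exact: deg_bounds.
Qed.

(* Two adjacent leaves would form a whole connected component, but n > 2. *)
Lemma medges11_eq0 : m 1 1 = 0.
Proof.
apply: eq_card0 => -[a b]; rewrite !inE /= orbb.
apply/and3P=> -[_ eab /andP[/eqP da /eqP db]].
have unique_nb x y z : deg e x = 1 -> e x y -> e x z -> y = z.
  move=> /eqP/cards1P[w Nx] exy exz.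
  have /set1P-> : y \in [set w] by rewrite -Nx inE.
  by have /set1P-> : z \in [set w] by rewrite -Nx inE.
have /card_gt0P[c] : 0 < #|~: [set a; b]|.
  have : #|[set a; b]| <= 2 by rewrite cards2; case: (a != b).
  by have := cardsC [set a; b]; rewrite card_ord; lia.
rewrite inE => cab.
have [u [v [uab vab euv]]] := connected_cut_edge e_conn (setU11 a [set b]) cab.
move: uab vab; rewrite !inE => /orP[] /eqP uE; rewrite {u}uE in euv => /negP[].
  by rewrite (unique_nb _ _ _ da euv eab) eqxx orbT.
by rewrite (unique_nb _ _ _ db euv (etrans (e_sym b a) eab)) eqxx.
Qed.

Lemma handshake_expanded :
  [/\ nv 1 = m 1 2 + m 1 3 + m 1 4,
      2 * nv 2 = m 1 2 + 2 * m 2 2 + m 2 3 + m 2 4,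
      3 * nv 3 = m 1 3 + m 2 3 + 2 * m 3 3 + m 3 4 &
      4 * nv 4 = m 1 4 + m 2 4 + m 3 4 + 2 * m 4 4].
Proof.
have := handshake 1; have := handshake 2; have := handshake 3; have := handshake 4.
by rewrite !big_deg_pairs /= !natrDE medges11_eq0; split; lia.
Qed.

Lemma leaf_count : nv 1 = 2 + nv 3 + 2 * nv 4.
Proof.
have := nverts_total; have := medges_total; case: handshake_expanded.
by rewrite medges11_eq0; lia.
Qed.

Lemma forest_bound : m 3 3 + m 3 4 + m 4 4 <= nv 3 + nv 4 - 1.
Proof.
pose S := [set u | 3 <= deg e u].
have := card_induced_edges_acyclic e_irr e_sym S e_acyclic.
have -> : #|S| = nv 3 + nv 4.
  rewrite /nverts !card_set_nat_sum -big_split; apply: eq_bigr => u _ /=.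
  by have := deg_bounds u; case: (deg e u) => [|[|[|[|[|k]]]]].
have -> : #|induced_edges e S| =
    \sum_(p in induced_edges e setT) ((3 <= deg e p.1) && (3 <= deg e p.2)).
  rewrite -sum1_card big_mkcond [RHS]big_mkcond; apply: eq_bigr => p _.
  by rewrite !inE; case: (_ < _)%N; case: (e _ _).
rewrite (sum_edges_deg_pairs_nat (f := fun a b => (3 <= a) && (3 <= b))) //.
- by rewrite big_deg_pairs /= !natrDE; lia.
- by move=> a b; rewrite andbC.
- exact: deg_bounds.
Qed.

Lemma deg2_edges_gt0 : 0 < nv 2 < n -> 0 < m 1 2 + m 2 3 + m 2 4.
Proof.
case/andP=> /card_gt0P[x x2] lt_nv2_n.
have /card_gt0P[y] : 0 < #|~: [set u | deg e u == 2]|.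
  by have := cardsC [set u | deg e u == 2]; rewrite card_ord -/(nverts e 2); lia.
rewrite inE => y2; have [a [b [a2 b2 eab]]] := connected_cut_edge e_conn x2 y2.
move: a2 b2 (medges_gt0 e_irr e_sym eab); rewrite !inE => /eqP-> b2.
have := deg_bounds b; case: (deg e b) b2 => [|[|[|[|[|k]]]]] //= _ _;
  by rewrite ?[m 2 1]medgesC; lia.
Qed.

Lemma max_deg_le3_nverts4 : max_deg_le e 3 <-> nv 4 = 0.
Proof.
split=> [deg_le3|nv4_0 u].
  by apply: eq_card0 => u; rewrite inE; have := deg_le3 u; case: eqP => // ->.
have /andP[_] := deg_bounds u; rewrite leq_eqVlt => /orP[/eqP deg4|//].
by move/eqP: nv4_0; rewrite cards_eq0 => /eqP/setP/(_ u); rewrite !inE deg4.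
Qed.

Lemma no_deg4_medges : nv 4 = 0 -> [/\ m 1 4 = 0, m 2 4 = 0, m 3 4 = 0 & m 4 4 = 0].
Proof.
by case: handshake_expanded => _ _ _ deg4 nv4_0; rewrite nv4_0 in deg4; split; lia.
Qed.

Lemma in_A_of_small :
  13 <= n -> nv 4 = 0 -> nv 3 <= 2 -> exists2 i, 1 <= i <= 13 & in_A e i.
Proof.
move=> n_ge13 nv4_0 nv3_le2; have [m14 m24 m34 m44] := no_deg4_medges nv4_0.
case: handshake_expanded => deg1 _ deg3 _.
have := leaf_count; have := forest_bound; have := medges_total; have := nverts_total.
rewrite medges11_eq0 m14 m24 m34 m44 nv4_0 => vertices edges forest leaves.
have deg2_cut : 0 < m 1 2 + m 2 3.
  have : 0 < nv 2 < n by apply/andP; split; lia.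
  by move/deg2_edges_gt0; rewrite m24 addn0.
have [i i_range mvecE] :=
  @small_mvec_cases n (nv 3) (m 1 2) (m 1 3) (m 2 2) (m 2 3) (m 3 3) nv3_le2
    ltac:(lia) ltac:(lia) ltac:(lia) ltac:(lia) deg2_cut.
by exists i => //; split=> //; apply/max_deg_le3_nverts4.
Qed.

Lemma in_Omega_of : nv 4 = 0 -> nv 3 = 3 -> m 3 3 = 2 -> m 1 3 = 0 -> in_Omega e.
Proof.
move=> nv4_0 nv3 m33 m13; have [m14 m24 m34 m44] := no_deg4_medges nv4_0.
case: handshake_expanded => deg1 _ deg3 _.
have := leaf_count; have := medges_total; have := nverts_total.
by rewrite medges11_eq0 => *; split=> //; split; lia.
Qed.

Lemma SO_medges (R : rcfType) : (SO R e =
  (m 1 1)%:R * Num.sqrt 2 + (m 1 2)%:R * Num.sqrt 5 + (m 1 3)%:R * Num.sqrt 10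
  + (m 1 4)%:R * Num.sqrt 17 + (m 2 2)%:R * Num.sqrt 8 + (m 2 3)%:R * Num.sqrt 13
  + (m 2 4)%:R * Num.sqrt 20 + (m 3 3)%:R * Num.sqrt 18 + (m 3 4)%:R * Num.sqrt 25
  + (m 4 4)%:R * Num.sqrt 32)%R.
Proof.
rewrite SO_induced_edges.
rewrite (sum_edges_deg_pairs (f := fun a b => Num.sqrt ((a ^ 2 + b ^ 2)%N%:R))).
- by rewrite big_deg_pairs !mulr_natl.
- by move=> a b; rewrite addnC.
- exact: deg_bounds.
Qed.

Lemma SO_max_deg3 (R : rcfType) : max_deg_le e 3 -> SO R e = SO_of_mvec R (mvec e).
Proof.
move/max_deg_le3_nverts4/no_deg4_medges=> [m14 m24 m34 m44].
by rewrite SO_medges medges11_eq0 m14 m24 m34 m44 SO_of_mvecE; lra.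
Qed.

Lemma SO_in_Omega (R : rcfType) : in_Omega e -> SO R e = SO_of_mvec R (Omega_mvec n).
Proof.
case=> _ [nv3 nv2 nv1] [m12 m23 m13] [m33 m22].
rewrite SO_max_deg3; first by rewrite /mvec m33 m23 m12 m13 m22.
by apply/max_deg_le3_nverts4; have := nverts_total; lia.
Qed.

Lemma SO_gt_Omega (R : rcfType) : 13 <= n ->
  (forall i, 1 <= i <= 13 -> ~ in_A e i) -> ~ in_Omega e ->
  (SO_of_mvec R (Omega_mvec n) < SO R e)%R.
Proof.
move=> n_ge13 notA notOmega.
have not_small : [\/ 0 < nv 4, 3 < nv 3, nv 3 = 3 /\ m 3 3 <= 1 | nv 3 = 3 /\ 0 < m 1 3].
  have [nv4_0|nv4_gt0] := posnP (nv 4); last by apply: Or41.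
  have [nv3_le2|] := leqP (nv 3) 2.
    by have [i /notA] := in_A_of_small n_ge13 nv4_0 nv3_le2.
  rewrite leq_eqVlt => /orP[/eqP nv3|nv3_gt3]; last by apply: Or42.
  have [m33_le1|m33_gt1] := leqP (m 3 3) 1; first by apply: Or43.
  have [m13_0|m13_gt0] := posnP (m 1 3); last by apply: Or44.
  by case: notOmega; apply: in_Omega_of => //; have := forest_bound; lia.
case: handshake_expanded => deg1 _ deg3 deg4.
rewrite SO_medges medges11_eq0 mul0r add0r.
apply: (@sombor_sum_gt_Omega R n n_ge13 (nv 3) (nv 4)) => //.
- by have := medges_total; rewrite medges11_eq0; lia.
- by have := leaf_count; lia.
- by have := forest_bound; case: not_small; lia.
Qed.

End ChemicalTree.

Unset Implicit Arguments.
Local Open Scope ring_scope.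

Theorem theorem3p3 (R : rcfType) (n : nat) (hn : (13 <= n)%N)
  (e1 e2 e3 e4 e5 e6 e7 e8 e9 e10 e11 e12 e13 e14 e : rel 'I_n) :
  in_A e1 1 -> in_A e2 4 -> in_A e3 3 -> in_A e4 2 -> in_A e5 13 ->
  in_A e6 11 -> in_A e7 12 -> in_A e8 9 -> in_A e9 10 -> in_A e10 7 ->
  in_A e11 8 -> in_A e12 6 -> in_A e13 5 -> in_Omega e14 ->
  chem_tree e ->
  (forall i : nat, (1 <= i <= 13)%N -> ~ in_A e i) ->
  ~ in_Omega e ->
  [/\ SO R e1 < SO R e2, SO R e2 < SO R e3, SO R e3 < SO R e4,
      SO R e4 < SO R e5 &
   [/\ SO R e5 < SO R e6, SO R e6 < SO R e7, SO R e7 < SO R e8,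
       SO R e8 < SO R e9 &
   [/\ SO R e9 < SO R e10, SO R e10 < SO R e11, SO R e11 < SO R e12,
       SO R e12 < SO R e13 &
   (SO R e13 < SO R e14 /\ SO R e14 < SO R e)]]].
Proof.
move=> A1 A4 A3 A2 A13 A11 A12 A9 A10 A7 A8 A6 A5 Omega14 e_chem notA notOmega.
have n_gt2 : (2 < n)%N by apply: leq_trans hn.
have SO_A i (e' : rel 'I_n) : in_A e' i -> SO R e' = SO_of_mvec R (Avec n i).
  by case=> e'_chem max_deg3 _ <-; apply: SO_max_deg3.
have [e14_chem _ _ _] := Omega14.
rewrite (SO_A _ _ A1) (SO_A _ _ A2) (SO_A _ _ A3) (SO_A _ _ A4) (SO_A _ _ A5).
rewrite (SO_A _ _ A6) (SO_A _ _ A7) (SO_A _ _ A8) (SO_A _ _ A9) (SO_A _ _ A10).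
rewrite (SO_A _ _ A11) (SO_A _ _ A12) (SO_A _ _ A13).
rewrite (SO_in_Omega e14_chem n_gt2 R Omega14).
have [c1 c2 c3 c4 [c5 c6 c7 c8 [c9 c10 c11 c12 c13]]] := SO_of_mvec_chain R hn.
by do 3!split=> //; split=> //; apply: SO_gt_Omega.
Qed.
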